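(* Let $m,\hbar>0$, $0<E<U_0$, $l>0$, and let $U:\mathbb{R}\to\mathbb{R}$ be piecewise continuous with $U(x)=0$ for $x<0$ and $U(x)=U_0$ for $x>l$. Let $\theta\in(-\pi/2,\pi/2)$, $\kappa=\sqrt{2mE}/\hbar$, $a=\kappa\sin\theta$, $k=\kappa\cos\theta$, $\lambda=\sqrt{a^2+\kappa^2}$, $K_U^2=\frac{2m}{\hbar^2}(U_0-E)$, and assume $K_U^2>a^2$; set $k_U=\sqrt{K_U^2-a^2}>0$, $\lambda_U=\sqrt{a^2+K_U^2}$. Consider $\partial_x\tilde\Psi=A(x)\tilde\Psi$ with $A(x)$ as below and $\tilde U=\frac{2m}{\hbar^2}(U-E)$. On $x<0$ let $\psi_R=e^{ikx}v_R$, $\psi_L=e^{-ikx}v_L$ with $v_R=(a+ik,-\kappa^2,-(a-ik),-\kappa^2)^t$, $v_L=\overline{v_R}$, and $\psi_+=e^{\lambda x}w_+$ with $w_+$ a nonzero eigenvector of the constant matrix $A|_{x<0}$ for the eigenvalue $\lambda$. On $x>l$ let $\phi_R=e^{ik_Ux}v_R'$, $\phi_L=e^{-ik_Ux}v_L'$ with $v_R'=(a+ik_U,-K_U^2,a-ik_U,K_U^2)^t$, $v_L'=\overline{v_R'}$, and $\phi_-=e^{-\lambda_Ux}w_-'$ with $w_-'$ a nonzero eigenvector of $A|_{x>l}$ for the eigenvalue $-\lambda_U$. Let $S$ be the space of solutions which equal $a_1\psi_R+a_2\psi_L+a_3\psi_+$ on $x<0$ and $a_4\phi_R+a_5\phi_L+a_6\phi_-$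 on $x>l$ for some constants $a_j\in\mathbb{C}$. Assume that the maps $S\to\mathbb{C}^2$, $\Psi\mapsto(a_1,a_2)$ and $\Psi\mapsto(a_4,a_5)$ are both linear bijections, and let $A_{n\text{-}p}$ be the $2\times2$ matrix with $(a_1,a_2)^t=A_{n\text{-}p}(a_4,a_5)^t$ for all elements of $S$. Then $$\det A_{n\text{-}p}=\frac{k_U\,(E-U_0)}{k\,E}.$$
   Context: Here $A(x)=\begin{pmatrix} a&1&0&0\\0&a&\tilde U(x)&0\\0&0&-a&1\\ \tilde U(x)&0&0&-a\end{pmatrix}$ is the bilayer graphene transfer equation; $\psi_R,\psi_L,\psi_+$ solve it on $x<0$ (where $\tilde U=-\kappa^2$) and $\phi_R,\phi_L,\phi_-$ solve it on $x>l$ (where $\tilde U=K_U^2$). $A_{n\text{-}p}$ is the transmission matrix of the n-p junction between the propagating-wave coefficients on the two sides. *)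

From Stdlib Require Export Reals List.
Open Scope R_scope.

Definition Cx : Type := (R * R)%type.
Definition RtoC (r : R) : Cx := (r, 0).
Definition Cadd (z w : Cx) : Cx := (fst z + fst w, snd z + snd w).
Definition Cmul (z w : Cx) : Cx :=
  (fst z * fst w - snd z * snd w, fst z * snd w + snd z * fst w).
Definition Csub (z w : Cx) : Cx := (fst z - fst w, snd z - snd w).
Definition Cconj (z : Cx) : Cx := (fst z, - snd z).
Definition Cexp (z : Cx) : Cx := (exp (fst z) * cos (snd z), exp (fst z) * sin (snd z)).

Record C4 := mkC4 { v0 : Cx; v1 : Cx; v2 : Cx; v3 : Cx }.
Definition C4zero : C4 := mkC4 (RtoC 0) (RtoC 0) (RtoC 0) (RtoC 0).
Definition C4add (v w : C4) : C4 :=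
  mkC4 (Cadd (v0 v) (v0 w)) (Cadd (v1 v) (v1 w)) (Cadd (v2 v) (v2 w)) (Cadd (v3 v) (v3 w)).
Definition C4scale (c : Cx) (v : C4) : C4 :=
  mkC4 (Cmul c (v0 v)) (Cmul c (v1 v)) (Cmul c (v2 v)) (Cmul c (v3 v)).
Definition C4conj (v : C4) : C4 :=
  mkC4 (Cconj (v0 v)) (Cconj (v1 v)) (Cconj (v2 v)) (Cconj (v3 v)).
Definition proj (j : nat) (v : C4) : Cx :=
  match j with 0 => v0 v | 1 => v1 v | 2 => v2 v | _ => v3 v end.

(* A v, where A = [[a,1,0,0],[0,a,u,0],[0,0,-a,1],[u,0,0,-a]] and u = Utilde(x) *)
Definition Amul (a u : R) (v : C4) : C4 :=
  mkC4 (Cadd (Cmul (RtoC a) (v0 v)) (v1 v))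
       (Cadd (Cmul (RtoC a) (v1 v)) (Cmul (RtoC u) (v2 v)))
       (Cadd (Cmul (RtoC (- a)) (v2 v)) (v3 v))
       (Cadd (Cmul (RtoC u) (v0 v)) (Cmul (RtoC (- a)) (v3 v))).

Definition C4_continuous_at (Psi : R -> C4) (x : R) : Prop :=
  forall j, continuity_pt (fun t => fst (proj j (Psi t))) x /\
            continuity_pt (fun t => snd (proj j (Psi t))) x.

Definition C4_deriv_at (Psi : R -> C4) (x : R) (d : C4) : Prop :=
  forall j, derivable_pt_lim (fun t => fst (proj j (Psi t))) x (fst (proj j d)) /\
            derivable_pt_lim (fun t => snd (proj j (Psi t))) x (snd (proj j d)).

Definition is_solution (a : R) (Ut : R -> R) (Psi : R -> C4) : Prop :=
  (forall x, C4_continuous_at Psi x) /\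
  (forall x, continuity_pt Ut x -> C4_deriv_at Psi x (Amul a (Ut x) (Psi x))).

Definition piecewise_continuous (U : R -> R) : Prop :=
  (forall lo hi : R, exists pts : list R,
      forall x, lo <= x <= hi -> ~ In x pts -> continuity_pt U x) /\
  (forall x : R,
      (exists L, forall eps, eps > 0 -> exists d, d > 0 /\
          forall y, x < y < x + d -> Rabs (U y - L) < eps) /\
      (exists L, forall eps, eps > 0 -> exists d, d > 0 /\
          forall y, x - d < y < x -> Rabs (U y - L) < eps)).

Definition comb3 (c1 : Cx) (f1 : R -> C4) (c2 : Cx) (f2 : R -> C4) (c3 : Cx) (f3 : R -> C4)
  (x : R) : C4 :=
  C4add (C4scale c1 (f1 x)) (C4add (C4scale c2 (f2 x)) (C4scale c3 (f3 x))).

Record Mat2 := mkMat2 { m11 : Cx; m12 : Cx; m21 : Cx; m22 : Cx }.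
Definition Mat2_det (M : Mat2) : Cx := Csub (Cmul (m11 M) (m22 M)) (Cmul (m12 M) (m21 M)).

From Stdlib Require Import Reals Lra.
From Coquelicot Require Complex.
Open Scope R_scope.

(* The matrix A(x) is infinitesimally symplectic for the skew form [symp], so
   [symp (Psi x) (Phi x)] is independent of x for any two solutions; continuity of
   solutions carries this across the finitely many jumps of U.  On either side the
   evanescent mode is [symp]-orthogonal to both propagating waves (their eigenvalues
   do not add up to 0), so the form evaluates to the 2x2 determinant of the
   propagating coefficients times [symp psiR psiL = -4ik kappa^2] on the left, resp.
   [symp phiR phiL = 4ik_U K_U^2] on the right.  Taking the two solutions with right
   coefficients (1,0) and (0,1) gives
   det A_{n-p} * (-4ik kappa^2) = 4ik_U K_U^2. *)


Definition symp (v w : C4) : Cx :=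
  Csub (Csub (Cmul (v0 v) (v3 w)) (Cmul (v3 v) (v0 w)))
       (Csub (Cmul (v1 v) (v2 w)) (Cmul (v2 v) (v1 w))).

Ltac split_eq :=
  lazymatch goal with
  | |- mkC4 _ _ _ _ = mkC4 _ _ _ _ => f_equal; split_eq
  | |- (_, _) = (_, _) => f_equal
  | _ => idtac
  end.

Ltac cx_ring :=
  repeat match goal with
         | v : C4 |- _ => destruct v as [[? ?] [? ?] [? ?] [? ?]]
         | z : Cx |- _ => destruct z as [? ?]
         end;
  cbv beta iota zeta delta [symp Csub Cmul Cadd C4add C4scale C4conj Cconj Amul RtoC fst snd v0 v1 v2 v3];
  split_eq; ring.

Add Field C_field : Complex.C_field_theory.

(* [Cx] and its operations are definitionally those of Coquelicot's [C]. *)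
Ltac to_coquelicot :=
  change Cmul with Complex.Cmult in *; change Csub with Complex.Cminus in *;
  change Cadd with Complex.Cplus in *; change RtoC with Complex.RtoC in *;
  change Cx with Complex.C in *.

Ltac C_ring := unfold Mat2_det; simpl; to_coquelicot; ring.

Lemma symp_addl u v w : symp (C4add u v) w = Cadd (symp u w) (symp v w).
Proof. cx_ring. Qed.

Lemma symp_addr u v w : symp w (C4add u v) = Cadd (symp w u) (symp w v).
Proof. cx_ring. Qed.

Lemma symp_scalel c u w : symp (C4scale c u) w = Cmul c (symp u w).
Proof. cx_ring. Qed.

Lemma symp_scaler c u w : symp w (C4scale c u) = Cmul c (symp w u).
Proof. cx_ring. Qed.

Lemma symp_antisym u w : symp w u = Csub (RtoC 0) (symp u w).
Proof. cx_ring. Qed.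

Lemma symp_self u : symp u u = RtoC 0.
Proof. cx_ring. Qed.

Lemma symp_Amul a u v w : Cadd (symp (Amul a u v) w) (symp v (Amul a u w)) = RtoC 0.
Proof. cx_ring. Qed.

Lemma Amul_conj a u v : Amul a u (C4conj v) = C4conj (Amul a u v).
Proof. cx_ring. Qed.

Lemma C4scale_conj c v : C4conj (C4scale c v) = C4scale (Cconj c) (C4conj v).
Proof. cx_ring. Qed.

Lemma Cmul_reg_r (x y z : Cx) : z <> RtoC 0 -> Cmul x z = Cmul y z -> x = y.
Proof.
  intros Hz Hxy. to_coquelicot.
  replace x with (Complex.Cmult (Complex.Cmult x z) (Complex.Cinv z)) by (field; exact Hz).
  rewrite Hxy. field. exact Hz.
Qed.

Lemma symp_eigen_orth a u v w mu nu :
  Amul a u v = C4scale mu v -> Amul a u w = C4scale nu w -> Cadd mu nu <> RtoC 0 ->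
  symp v w = RtoC 0.
Proof.
  intros Hv Hw Hmunu. apply (Cmul_reg_r _ _ _ Hmunu).
  pose proof (symp_Amul a u v w) as H.
  rewrite Hv, Hw, symp_scalel, symp_scaler in H.
  to_coquelicot. transitivity (Complex.RtoC 0); [rewrite <- H | ]; ring.
Qed.

Lemma Cadd_imag_real_neq0 y r : r <> 0 -> Cadd (0, y) (RtoC r) <> RtoC 0.
Proof. intros Hr H. injection H. lra. Qed.

Lemma symp_counterpropagating q x v w :
  symp (C4scale (Cexp (0, q * x)) v) (C4scale (Cexp (0, - q * x)) w) = symp v w.
Proof.
  rewrite symp_scalel, symp_scaler.
  replace (- q * x) with (- (q * x)) by ring.
  unfold Cexp; simpl. rewrite exp_0, cos_neg, sin_neg.
  pose proof (sin2_cos2 (q * x)) as Hpyth. unfold Rsqr in Hpyth.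
  set (s := sin (q * x)) in *; set (c := cos (q * x)) in *.
  destruct (symp v w) as [re im]. unfold Cmul; simpl.
  f_equal; [transitivity ((s * s + c * c) * re) | transitivity ((s * s + c * c) * im)];
    try ring; rewrite Hpyth; ring.
Qed.

Lemma conj_eigen a u v mu :
  Amul a u v = C4scale mu v -> Amul a u (C4conj v) = C4scale (Cconj mu) (C4conj v).
Proof. intros Hv. rewrite Amul_conj, Hv. apply C4scale_conj. Qed.

Lemma symp_scale_orth c d v w : symp v w = RtoC 0 -> symp (C4scale c v) (C4scale d w) = RtoC 0.
Proof. intros H. rewrite symp_scalel, symp_scaler, H. cx_ring. Qed.

Section Waves.

Variables (a q K : R).

Definition left_wave : C4 := mkC4 (a, q) (RtoC (- K)) (- a, q) (RtoC (- K)).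
Definition right_wave : C4 := mkC4 (a, q) (RtoC (- K)) (a, - q) (RtoC K).

Lemma left_wave_eigen : a ^ 2 + q ^ 2 = K -> Amul a (- K) left_wave = C4scale (0, q) left_wave.
Proof. unfold left_wave. intros <-. cx_ring. Qed.

Lemma right_wave_eigen : q ^ 2 + a ^ 2 = K -> Amul a K right_wave = C4scale (0, q) right_wave.
Proof. unfold right_wave. intros <-. cx_ring. Qed.

Lemma symp_left_wave_conj : symp left_wave (C4conj left_wave) = (0, - 4 * q * K).
Proof. unfold left_wave. cx_ring. Qed.

Lemma symp_right_wave_conj : symp right_wave (C4conj right_wave) = (0, 4 * q * K).
Proof. unfold right_wave. cx_ring. Qed.

End Waves.

Lemma left_basis_symp a k K lam w x :
  a ^ 2 + k ^ 2 = K -> 0 < lam -> Amul a (- K) w = C4scale (RtoC lam) w ->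
  let psiR := C4scale (Cexp (0, k * x)) (left_wave a k K) in
  let psiL := C4scale (Cexp (0, - k * x)) (C4conj (left_wave a k K)) in
  let psiP := C4scale (Cexp (lam * x, 0)) w in
  symp psiR psiP = RtoC 0 /\ symp psiL psiP = RtoC 0 /\ symp psiR psiL = (0, - 4 * k * K).
Proof.
  intros Hak Hlam Hw psiR psiL psiP.
  pose proof (left_wave_eigen a k K Hak) as Hv.
  assert (Hsum : forall y, Cadd (0, y) (RtoC lam) <> RtoC 0)
    by (intros; apply Cadd_imag_real_neq0; lra).
  split; [|split].
  - apply symp_scale_orth, (symp_eigen_orth _ _ _ _ _ _ Hv Hw), Hsum.
  - apply symp_scale_orth, (symp_eigen_orth _ _ _ _ _ _ (conj_eigen _ _ _ _ Hv) Hw), Hsum.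
  - unfold psiR, psiL. rewrite symp_counterpropagating. apply symp_left_wave_conj.
Qed.

Lemma right_basis_symp a k K lam w x :
  k ^ 2 + a ^ 2 = K -> 0 < lam -> Amul a K w = C4scale (RtoC (- lam)) w ->
  let phiR := C4scale (Cexp (0, k * x)) (right_wave a k K) in
  let phiL := C4scale (Cexp (0, - k * x)) (C4conj (right_wave a k K)) in
  let phiM := C4scale (Cexp (- lam * x, 0)) w in
  symp phiR phiM = RtoC 0 /\ symp phiL phiM = RtoC 0 /\ symp phiR phiL = (0, 4 * k * K).
Proof.
  intros Hak Hlam Hw phiR phiL phiM.
  pose proof (right_wave_eigen a k K Hak) as Hv.
  assert (Hsum : forall y, Cadd (0, y) (RtoC (- lam)) <> RtoC 0)
    by (intros; apply Cadd_imag_real_neq0; lra).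
  split; [|split].
  - apply symp_scale_orth, (symp_eigen_orth _ _ _ _ _ _ Hv Hw), Hsum.
  - apply symp_scale_orth, (symp_eigen_orth _ _ _ _ _ _ (conj_eigen _ _ _ _ Hv) Hw), Hsum.
  - unfold phiR, phiL. rewrite symp_counterpropagating. apply symp_right_wave_conj.
Qed.

Lemma constant_of_derivative_zero_off (g : R -> R) (pts : list R) lo hi : lo <= hi ->
  (forall x, lo <= x <= hi -> continuity_pt g x) ->
  (forall x, lo < x < hi -> ~ In x pts -> derivable_pt_lim g x 0) -> g lo = g hi.
Proof.
  revert lo hi. induction pts as [|p pts IH]; intros lo hi Hle Hc Hd.
  - destruct (Req_dec lo hi) as [<-|Hne]; [reflexivity|].
    assert (pr : forall x, lo < x < hi -> derivable_pt g x)
      by (intros x Hx; exists 0; apply Hd; auto).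
    symmetry. apply (null_derivative_loc g lo hi pr Hc); [|lra].
    intros x Hx. apply derive_pt_eq_0, Hd; auto.
  - assert (Hd' : forall lo' hi', lo <= lo' -> hi' <= hi -> ~ (lo' < p < hi') ->
                  forall x, lo' < x < hi' -> ~ In x pts -> derivable_pt_lim g x 0).
    { intros lo' hi' Hlo Hhi Hp x Hx Hn. apply Hd; [lra|].
      intros [<-|Hin]; [lra|contradiction]. }
    destruct (Rlt_dec lo p) as [H1|H1]; [destruct (Rlt_dec p hi) as [H2|H2]|].
    + transitivity (g p); apply IH; try lra;
        try (intros; apply Hc; lra); apply Hd'; lra.
    + apply IH; auto. apply Hd'; lra.
    + apply IH; auto. apply Hd'; lra.
Qed.

Lemma symp_continuous_at (Psi Phi : R -> C4) x :
  C4_continuous_at Psi x -> C4_continuous_at Phi x ->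
  continuity_pt (fun t => fst (symp (Psi t) (Phi t))) x /\
  continuity_pt (fun t => snd (symp (Psi t) (Phi t))) x.
Proof.
  intros H1 H2.
  destruct (H1 0%nat), (H1 1%nat), (H1 2%nat), (H1 3%nat),
    (H2 0%nat), (H2 1%nat), (H2 2%nat), (H2 3%nat).
  simpl in *. unfold symp, Csub, Cmul; simpl.
  split; repeat (apply continuity_pt_minus || apply continuity_pt_plus
                 || apply continuity_pt_mult || assumption).
Qed.

Lemma symp_derivative_zero (Psi Phi : R -> C4) a u x :
  C4_deriv_at Psi x (Amul a u (Psi x)) -> C4_deriv_at Phi x (Amul a u (Phi x)) ->
  derivable_pt_lim (fun t => fst (symp (Psi t) (Phi t))) x 0 /\
  derivable_pt_lim (fun t => snd (symp (Psi t) (Phi t))) x 0.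
Proof.
  intros H1 H2.
  destruct (H1 0%nat), (H1 1%nat), (H1 2%nat), (H1 3%nat),
    (H2 0%nat), (H2 1%nat), (H2 2%nat), (H2 3%nat).
  simpl in *. unfold symp, Csub, Cmul; simpl.
  split; match goal with |- derivable_pt_lim ?f x 0 =>
    let l := fresh in evar (l : R); replace 0 with l;
    [ unfold l; repeat (apply derivable_pt_lim_minus || apply derivable_pt_lim_plus
                        || apply derivable_pt_lim_mult || eassumption)
    | unfold l, Amul, Cadd, Cmul, RtoC; simpl; ring ] end.
Qed.

Lemma symp_solution_const a Ut (Psi Phi : R -> C4) lo hi : lo <= hi ->
  (exists pts, forall x, lo <= x <= hi -> ~ In x pts -> continuity_pt Ut x) ->
  is_solution a Ut Psi -> is_solution a Ut Phi ->
  symp (Psi lo) (Phi lo) = symp (Psi hi) (Phi hi).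
Proof.
  intros Hle [pts Hpts] [C1 D1] [C2 D2].
  assert (Hd : forall x, lo < x < hi -> ~ In x pts ->
            derivable_pt_lim (fun t => fst (symp (Psi t) (Phi t))) x 0 /\
            derivable_pt_lim (fun t => snd (symp (Psi t) (Phi t))) x 0).
  { intros x Hx Hn. apply (symp_derivative_zero _ _ a (Ut x)); apply D1 || apply D2;
      apply Hpts; auto; lra. }
  rewrite (surjective_pairing (symp (Psi lo) (Phi lo))),
    (surjective_pairing (symp (Psi hi) (Phi hi))).
  f_equal.
  - apply (constant_of_derivative_zero_off (fun t => fst (symp (Psi t) (Phi t))) pts); auto.
    + intros; apply symp_continuous_at; auto.
    + intros; apply Hd; auto.
  - apply (constant_of_derivative_zero_off (fun t => snd (symp (Psi t) (Phi t))) pts); auto.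
    + intros; apply symp_continuous_at; auto.
    + intros; apply Hd; auto.
Qed.

Lemma rescaled_piecewise_continuous (U : R -> R) c d lo hi : piecewise_continuous U ->
  exists pts, forall x, lo <= x <= hi -> ~ In x pts -> continuity_pt (fun t => c * (U t - d)) x.
Proof.
  intros [Hpc _]. destruct (Hpc lo hi) as [pts Hpts]. exists pts. intros x Hx Hn.
  apply continuity_pt_scal with (f := fun t => U t - d).
  apply continuity_pt_minus with (f2 := fun _ => d); [auto|apply continuity_pt_const].
  intros ? ?; reflexivity.
Qed.

Lemma symp_comb3 (a1 a2 a3 b1 b2 b3 : Cx) (f1 f2 f3 : R -> C4) x :
  symp (f1 x) (f3 x) = RtoC 0 -> symp (f2 x) (f3 x) = RtoC 0 ->
  symp (comb3 a1 f1 a2 f2 a3 f3 x) (comb3 b1 f1 b2 f2 b3 f3 x) =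
  Cmul (Mat2_det (mkMat2 a1 b1 a2 b2)) (symp (f1 x) (f2 x)).
Proof.
  intros H13 H23. unfold comb3.
  rewrite !symp_addl, !symp_addr, !symp_scalel, !symp_scaler, !symp_self,
    (symp_antisym (f1 x) (f2 x)), (symp_antisym (f1 x) (f3 x)), (symp_antisym (f2 x) (f3 x)),
    H13, H23.
  C_ring.
Qed.

Lemma cramer2 (BL BR a1 a2 a4 a5 c1 c2 d1 d2 : Cx) :
  Cmul (Mat2_det (mkMat2 c1 d1 c2 d2)) BL = BR -> BR <> RtoC 0 ->
  Cmul (Mat2_det (mkMat2 a1 c1 a2 c2)) BL = Cmul (Mat2_det (mkMat2 a4 (RtoC 1) a5 (RtoC 0))) BR ->
  Cmul (Mat2_det (mkMat2 a1 d1 a2 d2)) BL = Cmul (Mat2_det (mkMat2 a4 (RtoC 0) a5 (RtoC 1))) BR ->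
  a1 = Cadd (Cmul c1 a4) (Cmul d1 a5) /\ a2 = Cadd (Cmul c2 a4) (Cmul d2 a5).
Proof.
  intros Hdet HBR Hc Hd. split; apply (Cmul_reg_r _ _ _ HBR).
  - transitivity (Csub (Cmul c1 (Cmul (Mat2_det (mkMat2 a1 d1 a2 d2)) BL))
                       (Cmul d1 (Cmul (Mat2_det (mkMat2 a1 c1 a2 c2)) BL))).
    + rewrite <- Hdet. C_ring.
    + rewrite Hc, Hd. C_ring.
  - transitivity (Csub (Cmul c2 (Cmul (Mat2_det (mkMat2 a1 d1 a2 d2)) BL))
                       (Cmul d2 (Cmul (Mat2_det (mkMat2 a1 c1 a2 c2)) BL))).
    + rewrite <- Hdet. C_ring.
    + rewrite Hc, Hd. C_ring.
Qed.

Definition expands_on (D : R -> Prop) (f1 f2 f3 Psi : R -> C4) (c1 c2 : Cx) : Prop :=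
  exists c3, forall x, D x -> Psi x = comb3 c1 f1 c2 f2 c3 f3 x.

Section TransferMatrix.

Variables (sol : (R -> C4) -> Prop) (DL DR : R -> Prop) (xL xR : R)
  (f1 f2 f3 g1 g2 g3 : R -> C4).

Hypotheses (HxL : DL xL) (HxR : DR xR)
  (Hconserved : forall Psi Phi, sol Psi -> sol Phi ->
     symp (Psi xL) (Phi xL) = symp (Psi xR) (Phi xR))
  (Hf13 : symp (f1 xL) (f3 xL) = RtoC 0) (Hf23 : symp (f2 xL) (f3 xL) = RtoC 0)
  (Hg13 : symp (g1 xR) (g3 xR) = RtoC 0) (Hg23 : symp (g2 xR) (g3 xR) = RtoC 0)
  (Hg12 : symp (g1 xR) (g2 xR) <> RtoC 0).

Definition in_transfer_space (Psi : R -> C4) : Prop :=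
  sol Psi /\ (exists a1 a2, expands_on DL f1 f2 f3 Psi a1 a2) /\
  (exists a4 a5, expands_on DR g1 g2 g3 Psi a4 a5).

Definition is_transfer_matrix (M : Mat2) : Prop :=
  forall Psi a1 a2 a4 a5, in_transfer_space Psi ->
    expands_on DL f1 f2 f3 Psi a1 a2 -> expands_on DR g1 g2 g3 Psi a4 a5 ->
    a1 = Cadd (Cmul (m11 M) a4) (Cmul (m12 M) a5) /\
    a2 = Cadd (Cmul (m21 M) a4) (Cmul (m22 M) a5).

Lemma expansion_pairing Psi Phi a1 a2 b1 b2 a4 a5 b4 b5 : sol Psi -> sol Phi ->
  expands_on DL f1 f2 f3 Psi a1 a2 -> expands_on DL f1 f2 f3 Phi b1 b2 ->
  expands_on DR g1 g2 g3 Psi a4 a5 -> expands_on DR g1 g2 g3 Phi b4 b5 ->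
  Cmul (Mat2_det (mkMat2 a1 b1 a2 b2)) (symp (f1 xL) (f2 xL)) =
  Cmul (Mat2_det (mkMat2 a4 b4 a5 b5)) (symp (g1 xR) (g2 xR)).
Proof.
  intros HPsi HPhi [a3 HL1] [b3 HL2] [a6 HR1] [b6 HR2].
  rewrite <- (symp_comb3 a1 a2 a3 b1 b2 b3 f1 f2 f3 xL), <- HL1, <- HL2 by assumption.
  rewrite <- (symp_comb3 a4 a5 a6 b4 b5 b6 g1 g2 g3 xR), <- HR1, <- HR2 by assumption.
  apply Hconserved; assumption.
Qed.

Theorem transfer_matrix_exists_det :
  (forall a4 a5, exists Psi, in_transfer_space Psi /\ expands_on DR g1 g2 g3 Psi a4 a5) ->
  (exists M, is_transfer_matrix M) /\
  (forall M, is_transfer_matrix M ->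
     Cmul (Mat2_det M) (symp (f1 xL) (f2 xL)) = symp (g1 xR) (g2 xR)).
Proof.
  intros Hsurj.
  destruct (Hsurj (RtoC 1) (RtoC 0)) as [Psi1 [HS1 HR1]].
  destruct (Hsurj (RtoC 0) (RtoC 1)) as [Psi2 [HS2 HR2]].
  pose proof HS1 as [Hsol1 [[c1 [c2 HL1]] _]].
  pose proof HS2 as [Hsol2 [[d1 [d2 HL2]] _]].
  assert (Hdet : Cmul (Mat2_det (mkMat2 c1 d1 c2 d2)) (symp (f1 xL) (f2 xL)) =
                 symp (g1 xR) (g2 xR)).
  { rewrite (expansion_pairing Psi1 Psi2 _ _ _ _ _ _ _ _ Hsol1 Hsol2 HL1 HL2 HR1 HR2).
    C_ring. }
  split.
  - exists (mkMat2 c1 d1 c2 d2). intros Psi a1 a2 a4 a5 [Hsol _] HL HR.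
    apply (cramer2 _ _ _ _ _ _ _ _ _ _ Hdet Hg12).
    + exact (expansion_pairing _ _ _ _ _ _ _ _ _ _ Hsol Hsol1 HL HL1 HR HR1).
    + exact (expansion_pairing _ _ _ _ _ _ _ _ _ _ Hsol Hsol2 HL HL2 HR HR2).
  - intros M HM.
    destruct (HM Psi1 c1 c2 (RtoC 1) (RtoC 0)) as [E11 E21]; try assumption.
    destruct (HM Psi2 d1 d2 (RtoC 0) (RtoC 1)) as [E12 E22]; try assumption.
    rewrite <- Hdet, E11, E21, E12, E22. destruct M. C_ring.
Qed.

End TransferMatrix.

Lemma incidence_components kappa theta : 0 < kappa -> - (PI / 2) < theta < PI / 2 ->
  0 < kappa * cos theta /\ (kappa * sin theta) ^ 2 + (kappa * cos theta) ^ 2 = kappa ^ 2.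
Proof.
  intros Hkappa Htheta. pose proof (cos_gt_0 theta) as Hcos.
  pose proof (sin2_cos2 theta) as Hpyth. unfold Rsqr in Hpyth.
  split; [apply Rmult_lt_0_compat; auto; lra | nra].
Qed.

Lemma sqrt_pos_sq r : 0 < r -> 0 < sqrt r /\ sqrt r ^ 2 = r.
Proof. intros Hr. split; [apply sqrt_lt_R0 | apply pow2_sqrt]; lra. Qed.

Theorem mainTheorem6 (m hbar E U0 l : R) (U : R -> R) (theta : R) (w_plus w_minus : C4) :
  0 < m -> 0 < hbar -> 0 < E -> E < U0 -> 0 < l ->
  piecewise_continuous U ->
  (forall x, x < 0 -> U x = 0) ->
  (forall x, l < x -> U x = U0) ->
  - (PI / 2) < theta < PI / 2 ->
  let kappa := sqrt (2 * m * E) / hbar in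
  let a := kappa * sin theta in
  let k := kappa * cos theta in
  let lam := sqrt (a ^ 2 + kappa ^ 2) in
  let KU2 := 2 * m / hbar ^ 2 * (U0 - E) in
  KU2 > a ^ 2 ->
  let kU := sqrt (KU2 - a ^ 2) in
  let lamU := sqrt (a ^ 2 + KU2) in
  let Ut := fun x => 2 * m / hbar ^ 2 * (U x - E) in
  w_plus <> C4zero -> Amul a (- kappa ^ 2) w_plus = C4scale (RtoC lam) w_plus ->
  w_minus <> C4zero -> Amul a KU2 w_minus = C4scale (RtoC (- lamU)) w_minus ->
  let vR := mkC4 (a, k) (RtoC (- kappa ^ 2)) (- a, k) (RtoC (- kappa ^ 2)) in
  let vL := C4conj vR in
  let vR' := mkC4 (a, kU) (RtoC (- KU2)) (a, - kU) (RtoC KU2) in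
  let vL' := C4conj vR' in
  let psiR := fun x => C4scale (Cexp (0, k * x)) vR in
  let psiL := fun x => C4scale (Cexp (0, - k * x)) vL in
  let psiP := fun x => C4scale (Cexp (lam * x, 0)) w_plus in
  let phiR := fun x => C4scale (Cexp (0, kU * x)) vR' in
  let phiL := fun x => C4scale (Cexp (0, - kU * x)) vL' in
  let phiM := fun x => C4scale (Cexp (- lamU * x, 0)) w_minus in
  let coeffL := fun (Psi : R -> C4) (a1 a2 : Cx) =>
    exists a3 : Cx, forall x, x < 0 -> Psi x = comb3 a1 psiR a2 psiL a3 psiP x in
  let coeffR := fun (Psi : R -> C4) (a4 a5 : Cx) =>
    exists a6 : Cx, forall x, l < x -> Psi x = comb3 a4 phiR a5 phiL a6 phiM x in
  let inS := fun Psi : R -> C4 =>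
    is_solution a Ut Psi /\ (exists a1 a2, coeffL Psi a1 a2) /\
    (exists a4 a5, coeffR Psi a4 a5) in
  (forall a1 a2 : Cx,
     (exists Psi, inS Psi /\ coeffL Psi a1 a2) /\
     (forall Psi Psi', inS Psi -> inS Psi' -> coeffL Psi a1 a2 -> coeffL Psi' a1 a2 ->
        forall x, Psi x = Psi' x)) ->
  (forall a4 a5 : Cx,
     (exists Psi, inS Psi /\ coeffR Psi a4 a5) /\
     (forall Psi Psi', inS Psi -> inS Psi' -> coeffR Psi a4 a5 -> coeffR Psi' a4 a5 ->
        forall x, Psi x = Psi' x)) ->
  let isAnp := fun M : Mat2 =>
    forall (Psi : R -> C4) (a1 a2 a4 a5 : Cx),
      inS Psi -> coeffL Psi a1 a2 -> coeffR Psi a4 a5 ->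
      a1 = Cadd (Cmul (m11 M) a4) (Cmul (m12 M) a5) /\
      a2 = Cadd (Cmul (m21 M) a4) (Cmul (m22 M) a5) in
  (exists M, isAnp M) /\
  (forall M, isAnp M -> Mat2_det M = RtoC (kU * (E - U0) / (k * E))).
Proof.
  intros Hm Hh HE HEU Hl Hpc _ _ Htheta kappa a k lam KU2 HKU2 kU lamU Ut
    _ Hwp _ Hwm vR vL vR' vL' psiR psiL psiP phiR phiL phiM coeffL coeffR inS
    _ HbijR isAnp.
  destruct (sqrt_pos_sq (2 * m * E)) as [Hsq Hsq2]; [nra|].
  assert (Hkappa : 0 < kappa) by (apply Rdiv_lt_0_compat; assumption).
  assert (Hkappa2 : kappa ^ 2 = 2 * m * E / hbar ^ 2)
    by (unfold kappa, Rdiv; rewrite Rpow_mult_distr, Hsq2, pow_inv; ring).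
  destruct (incidence_components kappa theta Hkappa Htheta) as [Hk Hak]; fold a k in Hk, Hak.
  destruct (sqrt_pos_sq (KU2 - a ^ 2)) as [HkU HkU2]; [lra|]; fold kU in HkU, HkU2.
  destruct (left_basis_symp a k (kappa ^ 2) lam w_plus (-1)) as (HL13 & HL23 & HL12);
    [exact Hak | apply sqrt_pos_sq; nra | exact Hwp |].
  destruct (right_basis_symp a kU KU2 lamU w_minus (l + 1)) as (HR13 & HR23 & HR12);
    [lra | apply sqrt_pos_sq; nra | exact Hwm |].
  destruct (transfer_matrix_exists_det (is_solution a Ut) (fun x => x < 0) (fun x => l < x)
              (-1) (l + 1) psiR psiL psiP phiR phiL phiM) as [Hex Hdet];
    try assumption; [lra | lra | | | intros a4 a5; exact (proj1 (HbijR a4 a5)) |].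
  - intros Psi Phi HPsi HPhi. apply (symp_solution_const a Ut); [lra | | assumption ..].
    apply rescaled_piecewise_continuous, Hpc.
  - rewrite (HR12 : symp (phiR (l + 1)) (phiL (l + 1)) = _). intros [=]. nra.
  - split; [exact Hex|]. intros M HM. specialize (Hdet M HM).
    rewrite (HL12 : symp (psiR (-1)) (psiL (-1)) = _),
      (HR12 : symp (phiR (l + 1)) (phiL (l + 1)) = _) in Hdet.
    assert (0 < k * kappa ^ 2) by (apply Rmult_lt_0_compat; [|apply pow_lt]; lra).
    apply (Cmul_reg_r _ _ (0, - 4 * k * kappa ^ 2)); [intros [=]; lra|].
    rewrite Hdet. unfold Cmul, RtoC; cbn [fst snd]. f_equal; [ring|].
    rewrite Hkappa2. unfold KU2. field. lra.
Qed.
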